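(* The expected number of C3's (directed 3-cycles on three distinct vertices, counted up to cyclic rotation) in the OSW graph $G_n$ is $\Theta(n^2)$.
   Context: For an integer $n\ge1$, the $n$-octahedral graph $G'_n=(V,E')$ is the undirected graph with vertex set $V=\{u\in\mathbb{Z}^3:|u_1|+|u_2|+|u_3|=n\}$ and edge set $E'=\{\{v,w\}\subset V: v\neq w,\ |v_i-w_i|\le 1 \text{ for all } i=1,2,3\}$. For $u,v\in V$, $d_{uv}$ denotes the shortest-path distance in $G'_n$, and $Z_u=\left(\sum_{w\in V\setminus\{u\}} d_{uw}^{-2}\right)^{-1}$. The OSW random graph $G_n=(V,E)$ is the directed graph in which, for every $\{u,v\}\in E'$, both $(u,v),(v,u)\in E$, and in addition each vertex $u\in V$, independently of the others, chooses one vertex $v\in V\setminus\{u\}$ with probability $Z_u d_{uv}^{-2}$ and the long-range edge $(u,v)$ is added to $E$. *)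

From HB Require Import structures.
From mathcomp Require Import all_boot all_order all_algebra.
Set Implicit Arguments. Unset Strict Implicit. Unset Printing Implicit Defensive.
Import Order.TTheory GRing.Theory Num.Theory.
Local Open Scope ring_scope.

(* Points of Z^3 with coordinates in [-n, n], encoded by ordinals i |-> i - n. *)
Definition pt (n : nat) : Type := ('I_(2 * n + 1) * 'I_(2 * n + 1) * 'I_(2 * n + 1))%type.

Definition crd (n : nat) (i : 'I_(2 * n + 1)) : int := (i : nat)%:Z - n%:Z.

Definition c1 n (p : pt n) : int := crd p.1.1.
Definition c2 n (p : pt n) : int := crd p.1.2.
Definition c3 n (p : pt n) : int := crd p.2.

Definition onV (n : nat) (p : pt n) : bool :=
  (absz (c1 p) + absz (c2 p) + absz (c3 p) == n)%N.

Definition V (n : nat) : finType := {p : pt n | onV p}.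

Definition adj (n : nat) (v w : V n) : bool :=
  [&& v != w,
      `|c1 (val v) - c1 (val w)| <= 1,
      `|c2 (val v) - c2 (val w)| <= 1 &
      `|c3 (val v) - c3 (val w)| <= 1].

Definition ball (n k : nat) (u : V n) : {set V n} :=
  iter k (fun S : {set V n} => S :|: [set w | [exists v in S, adj v w]]) [set u].

(* shortest-path distance d_uv in G'_n (the graph is connected, so the least
   k < #|V n| with v in ball k u exists) *)
Definition dist (n : nat) (u v : V n) : nat :=
  find (fun k => v \in ball k u) (iota 0 #|V n|).

Definition Zc (n : nat) (u : V n) : rat :=
  (\sum_(w : V n | w != u) ((dist u w)%:R ^- 2))^-1.

Definition prob (n : nat) (u v : V n) : rat :=
  if v == u then 0 else Zc u * ((dist u v)%:R ^- 2).

(* directed edge set E of G_n given the long-range choices f *)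
Definition edgeE (n : nat) (f : {ffun V n -> V n}) (a b : V n) : bool :=
  adj a b || (f a == b).

Definition numC3 (n : nat) (f : {ffun V n -> V n}) : rat :=
  (#|[set t : V n * V n * V n |
        [&& t.1.1 != t.1.2, t.1.2 != t.2, t.2 != t.1.1,
            edgeE f t.1.1 t.1.2, edgeE f t.1.2 t.2 & edgeE f t.2 t.1.1]]|)%:R / 3.

(* expected number of C3's in G_n: average over independent choices *)
Definition expectedC3 (n : nat) : rat :=
  \sum_(f : {ffun V n -> V n}) (\prod_(u : V n) prob u (f u)) * numC3 f.

(* The bounds hold for every choice of long-range contacts, so the expectation
   inherits them.  Whatever the choices, the upward unit triangles of the face
   x, y, z >= 0 of the octahedron are directed 3-cycles of local edges, and there
   are about n^2/4 of them.  Conversely, a 3-cycle (a, b, c) is determined by a and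
   the codes of the edges a -> b and b -> c, where the code of an edge is either
   "long-range" or its coordinate steps in {-1, 0, 1}^3; so there are at most
   28^2 |V| = O(n^2) cycles. *)

From HB Require Import structures.
From mathcomp Require Import all_boot all_order all_algebra.
From mathcomp Require Import zify lra.
Import Order.TTheory GRing.Theory Num.Theory.
Local Open Scope ring_scope.
Set Implicit Arguments. Unset Strict Implicit.

Section ProductDistribution.
Variables (R : numDomainType) (I J : finType) (p : I -> J -> R).
Hypotheses (p_ge0 : forall i j, 0 <= p i j) (p_sum1 : forall i, \sum_j p i j = 1).

Lemma sum_prod_ffun1 : \sum_(f : {ffun I -> J}) \prod_i p i (f i) = 1.
Proof. by rewrite -bigA_distr_bigA big1. Qed.

Lemma mean_ffun_bounds (g : {ffun I -> J} -> R) (L U : R) :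
  (forall f, L <= g f <= U) ->
  L <= \sum_(f : {ffun I -> J}) (\prod_i p i (f i)) * g f <= U.
Proof.
move=> gLU; have w_ge0 (f : {ffun I -> J}) : 0 <= \prod_i p i (f i).
  exact: prodr_ge0.
have mean_cst c : c = \sum_(f : {ffun I -> J}) (\prod_i p i (f i)) * c.
  by rewrite -mulr_suml sum_prod_ffun1 mul1r.
apply/andP; split; [rewrite [L]mean_cst | rewrite [U]mean_cst];
  by apply: ler_sum => f _; apply: (ler_wpM2l (w_ge0 f)); case/andP: (gLU f).
Qed.

End ProductDistribution.

Lemma side_gt0 n : (0 < 2 * n + 1)%N. Proof. by rewrite addn1. Qed.

Definition ord_of_coord n (x : nat) : 'I_(2 * n + 1) :=
  Ordinal (ltn_pmod (n + x) (side_gt0 n)).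

Lemma crd_ord_of_coord n x : (x <= n)%N -> crd (ord_of_coord n x) = x.
Proof. by move=> xn; rewrite /crd /= modn_small; lia. Qed.

Definition pt_of_coords n (x y z : nat) : pt n :=
  (ord_of_coord n x, ord_of_coord n y, ord_of_coord n z).

Lemma coords_pt_of_coords n x y z : (x + y + z = n)%N ->
  [/\ c1 (pt_of_coords n x y z) = x, c2 (pt_of_coords n x y z) = y
    & c3 (pt_of_coords n x y z) = z].
Proof. by move=> xyz; rewrite /c1 /c2 /c3 /= !crd_ord_of_coord //; lia. Qed.

Lemma onV_pt_of_coords n x y z : (x + y + z = n)%N -> onV (pt_of_coords n x y z).
Proof.
by move=> xyz; rewrite /onV; have [-> -> ->] := coords_pt_of_coords xyz; rewrite /= xyz.
Qed.

Definition pole n : V n :=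
  Sub _ (@onV_pt_of_coords n n 0 0 (etrans (addn0 _) (addn0 n))).

(* Junk (the pole) unless x + y + z = n. *)
Definition vtx n (x y z : nat) : V n := insubd (pole n) (pt_of_coords n x y z).

Lemma coords_vtx n x y z : (x + y + z = n)%N ->
  [/\ c1 (val (vtx n x y z)) = x, c2 (val (vtx n x y z)) = y
    & c3 (val (vtx n x y z)) = z].
Proof.
move=> xyz; rewrite /vtx insubdK ?inE; first exact: coords_pt_of_coords.
exact: onV_pt_of_coords.
Qed.

Lemma adj_vtx n x y z x' y' z' :
  (x + y + z = n)%N -> (x' + y' + z' = n)%N -> (x != x') || (y != y') ->
  `|x%:Z - x'%:Z| <= 1 -> `|y%:Z - y'%:Z| <= 1 -> `|z%:Z - z'%:Z| <= 1 ->
  adj (vtx n x y z) (vtx n x' y' z').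
Proof.
move=> xyz xyz' xy_neq dx dy dz.
have [a1 a2 a3] := coords_vtx xyz; have [b1 b2 b3] := coords_vtx xyz'.
rewrite /adj a1 a2 a3 b1 b2 b3 dx dy dz !andbT.
apply: contraTneq xy_neq => /(congr1 (fun v => (c1 (val v), c2 (val v)))).
by rewrite /= a1 a2 b1 b2 => -[-> ->]; rewrite !eqxx.
Qed.

Definition c3cycles n (f : {ffun V n -> V n}) : {set V n * V n * V n} :=
  [set t : V n * V n * V n |
        [&& t.1.1 != t.1.2, t.1.2 != t.2, t.2 != t.1.1,
            edgeE f t.1.1 t.1.2, edgeE f t.1.2 t.2 & edgeE f t.2 t.1.1]].

Lemma numC3E n (f : {ffun V n -> V n}) : numC3 f = #|c3cycles f|%:R / 3.
Proof. by []. Qed.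

Lemma adj_triangle_in_c3cycles n (f : {ffun V n -> V n}) (a b c : V n) :
  adj a b -> adj b c -> adj c a -> (a, b, c) \in c3cycles f.
Proof.
move=> ab bc ca; rewrite inE /= /edgeE ab bc ca !orTb !andbT.
by move: ab bc ca => /andP[-> _] /andP[-> _] /andP[-> _].
Qed.

(* Upward unit triangles of the face x, y, z >= 0 of the octahedron. *)
Definition corner_triangle n (p : 'I_(n./2) * 'I_(n./2)) : V n * V n * V n :=
  let i := (p.1 : nat) in let j := (p.2 : nat) in let z := (n - i.+1 - j)%N in
  (vtx n i.+1 j z, vtx n i j.+1 z, vtx n i j z.+1).

Lemma corner_triangle_in_c3cycles n (f : {ffun V n -> V n}) p :
  corner_triangle p \in c3cycles f.
Proof.
case: p => i j; have hi := ltn_ord i; have hj := ltn_ord j.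
have hn : (n./2.*2 <= n)%N by rewrite -geq_half_double.
rewrite /corner_triangle /=.
apply: adj_triangle_in_c3cycles; apply: adj_vtx; lia.
Qed.

Lemma corner_triangle_inj n : injective (@corner_triangle n).
Proof.
move=> [i j] [i' j']; have hn : (n./2.*2 <= n)%N by rewrite -geq_half_double.
have hi := ltn_ord i; have hj := ltn_ord j; have hi' := ltn_ord i'; have hj' := ltn_ord j'.
move=> /(congr1 (fun t => (c1 (val t.1.1), c2 (val t.1.1)))) /=.
have [-> -> _] := @coords_vtx n i.+1 j (n - i.+1 - j) ltac:(lia).
have [-> -> _] := @coords_vtx n i'.+1 j' (n - i'.+1 - j') ltac:(lia).
by case=> ii' jj'; congr (_, _); apply: val_inj.
Qed.

Lemma card_c3cycles_ge n (f : {ffun V n -> V n}) : (n./2 ^ 2 <= #|c3cycles f|)%N.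
Proof.
have <- : #|@corner_triangle n @: [set: 'I_(n./2) * 'I_(n./2)]| = (n./2 ^ 2)%N.
  by rewrite card_imset ?cardsT ?card_prod ?card_ord //; exact: corner_triangle_inj.
apply/subset_leq_card/subsetP => _ /imsetP[p _ ->].
exact: corner_triangle_in_c3cycles.
Qed.

Lemma card_paths2_le (T C : finType) (e : rel T) (code : T -> T -> C) :
  (forall a, {in [pred b | e a b] &, injective (code a)}) ->
  (#|[set t : T * T * T | e t.1.1 t.1.2 && e t.1.2 t.2]| <= #|T| * #|C| ^ 2)%N.
Proof.
move=> code_inj; pose h (t : T * T * T) := (t.1.1, code t.1.1 t.1.2, code t.1.2 t.2).
have h_inj : {in [set t : T * T * T | e t.1.1 t.1.2 && e t.1.2 t.2] &, injective h}.
  move=> [[a b] c] [[a' b'] c']; rewrite !inE /= /h /=.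
  move=> /andP[ab bc] /andP[ab' bc'] [ea eb ec]; subst a'.
  have eb' := code_inj _ _ _ ab ab' eb; subst b'.
  by rewrite (code_inj _ _ _ bc bc' ec).
rewrite -(card_in_imset h_inj); apply: leq_trans (max_card _) _.
by rewrite !card_prod mulnA.
Qed.

(* [crd j - crd i + 1], which lies in {0, 1, 2} along an edge of the octahedral graph. *)
Definition step_code n (i j : 'I_(2 * n + 1)) : 'I_3 := inord (j.+1 - i).

Lemma step_code_inj n (i j j' : 'I_(2 * n + 1)) :
  `|crd i - crd j| <= 1 -> `|crd i - crd j'| <= 1 ->
  step_code i j = step_code i j' -> j = j'.
Proof.
rewrite /crd => ij ij' /(congr1 val) /=.
by rewrite !inordK; [move=> e; apply: val_inj => /=; lia | lia | lia].
Qed.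

Definition edge_code n (f : {ffun V n -> V n}) (a b : V n) :
  option ('I_3 * 'I_3 * 'I_3) :=
  if f a == b then None
  else Some (step_code (val a).1.1 (val b).1.1, step_code (val a).1.2 (val b).1.2,
             step_code (val a).2 (val b).2).

Lemma edge_code_inj n (f : {ffun V n -> V n}) (a : V n) :
  {in [pred b | edgeE f a b] &, injective (edge_code f a)}.
Proof.
move=> b b'; rewrite !inE /edgeE /edge_code.
case: (eqVneq (f a) b) => [<-|fab]; case: (eqVneq (f a) b') => [<-|fab'] //=.
rewrite !orbF => /and4P[_ x y z] /and4P[_ x' y' z'] [ex ey ez].
have := step_code_inj x x' ex; have := step_code_inj y y' ey.
have := step_code_inj z z' ez => e3 e2 e1; apply: val_inj.
by move: (val b) (val b') e1 e2 e3 => [[? ?] ?] [[? ?] ?] /= -> -> ->.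
Qed.

Lemma card_c3cycles_le n (f : {ffun V n -> V n}) :
  (#|c3cycles f| <= #|V n| * 28 ^ 2)%N.
Proof.
have -> : 28%N = #|{: option ('I_3 * 'I_3 * 'I_3)}|.
  by rewrite card_option !card_prod card_ord.
apply: leq_trans (card_paths2_le (@edge_code_inj n f)).
apply/subset_leq_card/subsetP => t; rewrite !inE.
by case/and5P=> _ _ _ -> /andP[-> _].
Qed.

(* A vertex is determined by its first two coordinates and the sign of the third. *)
Lemma card_V_le n : (#|V n| <= 2 * (2 * n + 1) ^ 2)%N.
Proof.
pose h (v : V n) := ((val v).1.1, (val v).1.2, (0 <= c3 (val v))).
have h_inj : injective h.
  move=> [[[x y] z] hv] [[[x' y'] z'] hv'].
  rewrite /h /= => -[ex ey sz]; subst x' y'.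
  apply: val_inj; congr (_, _); apply: val_inj.
  move: hv hv' sz; rewrite /onV /c1 /c2 /c3 /crd /= => /eqP hv /eqP hv'.
  by case: (lerP 0 (z%:Z - n%:Z)); case: (lerP 0 (z'%:Z - n%:Z)) => //= *; lia.
rewrite -(card_image h_inj); apply: leq_trans (max_card _) _.
by rewrite !card_prod !card_ord card_bool mulnC.
Qed.

Lemma exists_other_vertex n (u : V n) : (0 < n)%N -> exists w : V n, w != u.
Proof.
move=> n_gt0; have [x1 _ _] := @coords_vtx n n 0 0 ltac:(lia).
have [y1 _ _] := @coords_vtx n 0 n 0 ltac:(lia).
have xy : vtx n n 0 0 != vtx n 0 n 0.
  by apply/eqP => /(congr1 (fun v => c1 (val v))); rewrite x1 y1; lia.
have [<-|xu] := eqVneq (vtx n n 0 0) u; last by exists (vtx n n 0 0).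
by exists (vtx n 0 n 0); rewrite eq_sym.
Qed.

Lemma dist_gt0 n (u w : V n) : w != u -> (0 < dist u w)%N.
Proof.
move=> wu; rewrite /dist; have : (0 < #|V n|)%N by apply/card_gt0P; exists u.
by case: #|V n| => //= k _; rewrite inE (negbTE wu).
Qed.

Lemma prob_ge0 n (u v : V n) : 0 <= prob u v.
Proof.
rewrite /prob; case: eqP => // _; rewrite mulr_ge0 ?invr_ge0 ?exprn_ge0 //.
by rewrite sumr_ge0 // => w _; rewrite invr_ge0 exprn_ge0.
Qed.

Lemma sum_prob n (u : V n) : (0 < n)%N -> \sum_v prob u v = 1.
Proof.
move=> n_gt0; rewrite (bigD1 u) //= /prob eqxx add0r.
under eq_bigr => v /negbTE -> do [].
rewrite -big_distrr /= /Zc mulVf //; have [w wu] := exists_other_vertex u n_gt0.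
rewrite (bigD1 w) //= lt0r_neq0 // ltr_wpDr ?sumr_ge0 // => [v _|].
  by rewrite invr_ge0 exprn_ge0.
by rewrite invr_gt0 exprn_gt0 // ltr0n dist_gt0.
Qed.

Lemma card_c3cycles_bounds n (f : {ffun V n -> V n}) : (2 <= n)%N ->
  (n ^ 2 <= 9 * #|c3cycles f|)%N /\ (#|c3cycles f| <= 18 * 784 * n ^ 2)%N.
Proof.
move=> n_ge2; have lo := card_c3cycles_ge f; have up := card_c3cycles_le f.
have cV := card_V_le n; have m_gt0 : (0 < n./2)%N by rewrite half_gt0.
have n_le : (n <= n./2 * 2 + 1)%N by rewrite addn1 muln2 -leq_half_double.
have sq_lo : (n ^ 2 <= 9 * n./2 ^ 2)%N.
  by rewrite -[9%N]/(3 ^ 2)%N -expnMn leq_exp2r //; lia.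
have sq_up : ((2 * n + 1) ^ 2 <= 9 * n ^ 2)%N.
  by rewrite -[9%N]/(3 ^ 2)%N -expnMn leq_exp2r //; lia.
rewrite -[(28 ^ 2)%N]/784%N in up.
move: lo up cV sq_lo sq_up; move: (n ^ 2)%N (n./2 ^ 2)%N ((2 * n + 1) ^ 2)%N #|V n|.
by move=> *; split; lia.
Qed.

Lemma numC3_bounds n (f : {ffun V n -> V n}) : (2 <= n)%N ->
  (27^-1 : rat) * n%:R ^+ 2 <= numC3 f <= 4704 * n%:R ^+ 2.
Proof.
move=> n_ge2; have [] := card_c3cycles_bounds f n_ge2.
by rewrite -!(ler_nat rat) !natrM numC3E => *; apply/andP; split; lra.
Qed.

Theorem corollary1 :
  exists (a b : rat), 0 < a /\ 0 < b /\
    exists N : nat, forall n : nat, (N <= n)%N ->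
      a * (n%:R ^+ 2) <= expectedC3 n /\ expectedC3 n <= b * (n%:R ^+ 2).
Proof.
exists 27^-1, 4704; split; first by rewrite invr_gt0 ltr0n.
split; first by rewrite ltr0n.
exists 2%N => n n_ge2; apply/andP.
apply: mean_ffun_bounds => [u v|u|f]; first exact: prob_ge0.
  by apply: sum_prob; lia.
exact: numC3_bounds.
Qed.
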